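(* Let $L\in\mathbb Z_{\ge1}$, $\delta>0$, $C>0$. For all $N\ge1$ and $z$ with $\mathrm{Re}(z)\le-\delta$, $|z|\le C$, $$-\chi(-z,N)=\frac{N}{z}\mathrm{Li}_2(e^{z})-\frac12\log(1-e^{z})+\sum_{\ell=2}^{L}\frac{B_\ell}{\ell!}\Big(\frac{z}{N}\Big)^{\ell-1}\mathrm{Li}_{2-\ell}(e^{z})+O\Big(\frac1{N^{L}}\Big),$$ with principal logarithm and an implied constant depending only on $L,\delta,C$.
   Context: For $\mathrm{Re}(w)>0$ and $t>0$, $\chi(w,t):=\sum_{r=1}^\infty\dfrac{e^{-rw}}{r(e^{rw/t}-1)}$. Polylogarithms: $\mathrm{Li}_s(u)=\sum_{n\ge1}u^n/n^s$ for $|u|<1$. $B_n$ are the Bernoulli numbers ($z/(e^z-1)=\sum B_nz^n/n!$). *)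

From Stdlib Require Import Reals Lra List ZArith Arith Factorial ClassicalEpsilon.
Open Scope R_scope.

Definition Cx : Type := (R * R)%type.
Definition Re (z : Cx) : R := fst z.
Definition Im (z : Cx) : R := snd z.
Definition RtoC (x : R) : Cx := (x, 0).
Definition Cadd (z w : Cx) : Cx := (Re z + Re w, Im z + Im w).
Definition Copp (z : Cx) : Cx := (- Re z, - Im z).
Definition Csub (z w : Cx) : Cx := Cadd z (Copp w).
Definition Cmul (z w : Cx) : Cx :=
  (Re z * Re w - Im z * Im w, Re z * Im w + Im z * Re w).
Definition Cinv (z : Cx) : Cx :=
  (Re z / (Re z ^ 2 + Im z ^ 2), - Im z / (Re z ^ 2 + Im z ^ 2)).
Definition Cdiv (z w : Cx) : Cx := Cmul z (Cinv w).
Definition Cnorm (z : Cx) : R := sqrt (Re z ^ 2 + Im z ^ 2).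
Fixpoint Cpow (z : Cx) (n : nat) : Cx :=
  match n with O => RtoC 1 | S m => Cmul z (Cpow z m) end.
Definition Cexp (z : Cx) : Cx := (exp (Re z) * cos (Im z), exp (Re z) * sin (Im z)).
(** principal argument, in (-PI, PI] *)
Definition Carg (z : Cx) : R :=
  let x := Re z in let y := Im z in
  match Rlt_dec 0 x with
  | left _ => atan (y / x)
  | right _ =>
    match Rlt_dec x 0 with
    | left _ => match Rle_dec 0 y with
                | left _ => atan (y / x) + PI
                | right _ => atan (y / x) - PI end
    | right _ =>
      match Rlt_dec 0 y with
      | left _ => PI / 2
      | right _ => match Rlt_dec y 0 with left _ => - (PI / 2) | right _ => 0 end
      end
    end
  end.
Definition Clog (z : Cx) : Cx := (ln (Cnorm z), Carg z).

Fixpoint Cpartial (f : nat -> Cx) (m : nat) : Cx :=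
  match m with O => f O | S k => Cadd (Cpartial f k) (f (S k)) end.
Definition Cseries_cv (f : nat -> Cx) (l : Cx) : Prop :=
  Un_cv (fun m => Re (Cpartial f m)) (Re l) /\ Un_cv (fun m => Im (Cpartial f m)) (Im l).
(** value of a convergent series (sum_{n>=0} f n); chosen by epsilon, 0 if divergent *)
Definition Cseries (f : nat -> Cx) : Cx :=
  epsilon (inhabits (RtoC 0)) (fun l => Cseries_cv f l).

Definition Li (s : Z) (u : Cx) : Cx :=
  Cseries (fun n => Cmul (Cpow u (S n)) (RtoC (powerRZ (INR (S n)) (- s)))).

(** chi(w,t) = sum_{r>=1} e^{-rw} / (r (e^{rw/t} - 1)) *)
Definition chi (w : Cx) (t : R) : Cx :=
  Cseries (fun n =>
    let r := INR (S n) in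
    Cdiv (Cexp (Cmul (RtoC (- r)) w))
         (Cmul (RtoC r) (Csub (Cexp (Cmul (RtoC (r / t)) w)) (RtoC 1)))).

(** Bernoulli numbers, z/(e^z-1) = sum B_n z^n/n!  (so B_1 = -1/2), via the
    equivalent standard recurrence  sum_{k=0}^{m} C(m+1,k) B_k = 0 (m>=1), B_0 = 1.
    bern_list n = [B_0; ...; B_n]. *)
Fixpoint bern_list (n : nat) : list R :=
  match n with
  | O => 1 :: nil
  | S k =>
    let l := bern_list k in
    let m := S k in
    l ++ (- / INR (m + 1) *
          fold_right Rplus 0 (map (fun j => C (m + 1) j * nth j l 0) (seq 0 m))) :: nil
  end.
Definition bernoulli (n : nat) : R := nth n (bern_list n) 0.

Definition prop24_rhs (L N : nat) (z : Cx) : Cx :=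
  Cadd (Cadd (Cmul (Cdiv (RtoC (INR N)) z) (Li 2 (Cexp z)))
             (Cmul (RtoC (- / 2)) (Clog (Csub (RtoC 1) (Cexp z)))))
       (fold_right Cadd (RtoC 0)
          (map (fun l => Cmul (RtoC (bernoulli l / INR (fact l)))
                              (Cmul (Cpow (Cdiv z (RtoC (INR N))) (l - 1))
                                    (Li (2 - Z.of_nat l) (Cexp z))))
               (seq 2 (L - 1)))).

(* For r >= 1 put y = r z / N; the r-th term of chi(-z, N) is e^(rz) / (r (e^(-y) - 1)).
   Write 1 / (e^y - 1) = Q_L(y) / y + R_L(y), with Q_L the degree-L truncation of the
   generating function y / (e^y - 1) = sum B_n y^n / n!.  Summed over r, the Q_L part of
   - chi(-z, N) is exactly N/z Li_2(e^z) + 1/2 Li_1(e^z) + sum_l B_l / l! (z/N)^(l-1) Li_(2-l)(e^z), and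
   Li_1(e^z) = - log (1 - e^z).  On a sector |y| <= m (- Re y), which contains every r z / N,
   one has |R_L(y)| <= A |y|^L (from the Taylor remainder of e^y for small y and crude
   bounds for large y), so the error is at most A (|z| / N)^L sum_r r^(L-1) e^(r Re z). *)

From Pilot Require Import Defs.
From Stdlib Require Import Reals Lra Lia List ZArith Factorial ClassicalEpsilon.
From Coquelicot Require Import Coquelicot.
Open Scope R_scope.

(** * Finite sums *)

Fixpoint csum (f : nat -> C) (n : nat) : C :=
  match n with O => RtoC 0 | S k => (csum f k + f k)%C end.
Fixpoint rsum (f : nat -> R) (n : nat) : R :=
  match n with O => 0 | S k => rsum f k + f k end.

Lemma csum_ext f g n : (forall k, (k < n)%nat -> f k = g k) -> csum f n = csum g n.
Proof. induction n; intros H; simpl; auto. rewrite IHn, H; auto. Qed.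
Lemma rsum_ext f g n : (forall k, (k < n)%nat -> f k = g k) -> rsum f n = rsum g n.
Proof. induction n; intros H; simpl; auto. rewrite IHn, H; auto. Qed.
Lemma csum_0 f n : (forall k, (k < n)%nat -> f k = RtoC 0) -> csum f n = RtoC 0.
Proof. induction n; intros H; simpl; auto. rewrite IHn, H by auto. ring. Qed.
Lemma csum_recl f n : csum f (S n) = (f 0%nat + csum (fun k => f (S k)) n)%C.
Proof. induction n; simpl in *. ring. rewrite IHn. ring. Qed.
Lemma rsum_recl f n : rsum f (S n) = f 0%nat + rsum (fun k => f (S k)) n.
Proof. induction n; simpl in *. ring. rewrite IHn. ring. Qed.
Lemma csumZ c f n : csum (fun i => c * f i)%C n = (c * csum f n)%C.
Proof. induction n; simpl. ring. rewrite IHn. ring. Qed.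
Lemma csumZr c f n : csum (fun i => f i * c)%C n = (csum f n * c)%C.
Proof. induction n; simpl. ring. rewrite IHn. ring. Qed.
Lemma rsumZr c f n : rsum (fun i => f i * c) n = rsum f n * c.
Proof. induction n; simpl. ring. rewrite IHn. ring. Qed.
Lemma rsumZ c f n : rsum (fun i => c * f i) n = c * rsum f n.
Proof. induction n; simpl. ring. rewrite IHn. ring. Qed.
Lemma csumD f g n : csum (fun i => f i + g i)%C n = (csum f n + csum g n)%C.
Proof. induction n; simpl. ring. rewrite IHn. ring. Qed.
Lemma csumB f g n : csum (fun i => f i - g i)%C n = (csum f n - csum g n)%C.
Proof. induction n; simpl. ring. rewrite IHn. ring. Qed.
Lemma csumN f n : csum (fun i => - f i)%C n = (- csum f n)%C.
Proof. induction n; simpl. ring. rewrite IHn. ring. Qed.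
Lemma csum_RtoC f n : csum (fun k => RtoC (f k)) n = RtoC (rsum f n).
Proof. induction n; simpl; auto. rewrite IHn, RtoC_plus. reflexivity. Qed.
Lemma fst_csum f n : fst (csum f n) = rsum (fun k => fst (f k)) n.
Proof. induction n; simpl; auto. rewrite IHn; auto. Qed.
Lemma snd_csum f n : snd (csum f n) = rsum (fun k => snd (f k)) n.
Proof. induction n; simpl; auto. rewrite IHn; auto. Qed.
Lemma rsum_le f g n : (forall k, (k < n)%nat -> f k <= g k) -> rsum f n <= rsum g n.
Proof.
  induction n; intros H; simpl. lra.
  pose proof (H n (Nat.lt_succ_diag_r n)).
  assert (rsum f n <= rsum g n) by (apply IHn; intros; apply H; lia). lra.
Qed.
Lemma rsum_ge0 f n : (forall k, (k < n)%nat -> 0 <= f k) -> 0 <= rsum f n.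
Proof.
  intros H. replace 0 with (rsum (fun _ => 0) n) by (clear H; induction n; simpl; lra).
  apply rsum_le; auto.
Qed.
Lemma Cmod_csum_le f n : Cmod (csum f n) <= rsum (fun k => Cmod (f k)) n.
Proof.
  induction n; simpl. rewrite Cmod_0; lra.
  eapply Rle_trans. apply Cmod_triangle. lra.
Qed.

Lemma fold_right_map_seq_C (f : nat -> C) s n :
  fold_right Cadd (Defs.RtoC 0) (map f (seq s n)) = csum (fun i => f (s + i)%nat) n.
Proof.
  revert s; induction n; intros s. reflexivity.
  cbn [seq map fold_right]. rewrite IHn, csum_recl, Nat.add_0_r.
  rewrite (csum_ext (fun i => f (S s + i)%nat) (fun k => f (s + S k)%nat))
    by (intros; f_equal; lia).
  reflexivity.
Qed.

Lemma fold_right_map_seq_R (f : nat -> R) s n :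
  fold_right Rplus 0 (map f (seq s n)) = rsum (fun i => f (s + i)%nat) n.
Proof.
  revert s; induction n; intros s. reflexivity.
  cbn [seq map fold_right]. rewrite IHn, rsum_recl, Nat.add_0_r. f_equal.
  apply rsum_ext; intros; f_equal; lia.
Qed.

(** * The complex exponential *)

(* [Defs.Cexp] has codomain [Cx]; [ring] and [field] only recognise the type [C]. *)
Definition cexp (z : C) : C := Cexp z.

Lemma cexp_add a b : cexp (a + b)%C = (cexp a * cexp b)%C.
Proof.
  destruct a as [a1 a2], b as [b1 b2]; unfold cexp, Cexp, Defs.Re, Defs.Im; simpl.
  rewrite exp_plus, cos_plus, sin_plus.
  apply injective_projections; simpl; ring.
Qed.

Lemma cexp_0 : cexp (RtoC 0) = RtoC 1.
Proof.
  unfold cexp, Cexp, Defs.Re, Defs.Im; simpl. rewrite exp_0, cos_0, sin_0.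
  apply injective_projections; simpl; ring.
Qed.

Lemma cexp_oppK a : (cexp (- a) * cexp a)%C = RtoC 1.
Proof. rewrite <- cexp_add, <- cexp_0. f_equal. ring. Qed.

Lemma cexp_neq0 a : cexp a <> RtoC 0.
Proof.
  intros H. pose proof (cexp_oppK a) as H1. rewrite H, Cmult_0_r in H1.
  apply C1_nz. auto.
Qed.

Lemma cexp_opp a : cexp (- a)%C = (/ cexp a)%C.
Proof.
  pose proof (cexp_neq0 a).
  replace (cexp (- a)) with (cexp (- a) * cexp a * / cexp a)%C by (field; auto).
  rewrite cexp_oppK. apply Cmult_1_l.
Qed.

Lemma Cmod_cexp a : Cmod (cexp a) = exp (Re a).
Proof.
  destruct a as [a1 a2]; unfold Cmod, cexp, Cexp, Defs.Re, Defs.Im; simpl.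
  replace (_ * _ + _) with (exp a1 * exp a1)
    by (pose proof (sin2_cos2 a2) as H; unfold Rsqr in H; nra).
  apply sqrt_square. left; apply exp_pos.
Qed.

Lemma Cpow_cexp a n : Cpow (cexp a) n = cexp (RtoC (INR n) * a)%C.
Proof.
  induction n; simpl Cpow.
  - rewrite <- cexp_0. f_equal. simpl. ring.
  - rewrite IHn, <- cexp_add. f_equal. rewrite S_INR, RtoC_plus. ring.
Qed.

Lemma cexp_sub1_neq0 y : Re y <> 0 -> (cexp y - 1)%C <> RtoC 0.
Proof.
  intros Hy E. assert (E1 : cexp y = RtoC 1).
  { replace (cexp y) with ((cexp y - 1) + 1)%C by ring. rewrite E. ring. }
  apply (f_equal Cmod) in E1. rewrite Cmod_cexp, Cmod_1, <- exp_0 in E1.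
  apply exp_inv in E1. auto.
Qed.

Lemma exp_le_mono x y : x <= y -> exp x <= exp y.
Proof. intros [H|H]. left; apply exp_increasing; auto. subst; lra. Qed.

(** * Derivatives of complex-valued functions of a real variable *)

Lemma MVT_abs_le (f df : R -> R) a b B : a <= b ->
  (forall x, a <= x <= b -> is_derive f x (df x)) ->
  (forall x, a <= x <= b -> Rabs (df x) <= B) -> Rabs (f b - f a) <= B * (b - a).
Proof.
  intros Hab Hd HB.
  destruct (MVT_gen f a b df) as [c [Hc Heq]];
    rewrite ?Rmin_left, ?Rmax_right in * by lra.
  - intros x Hx. apply Hd; lra.
  - intros x Hx. apply continuity_pt_filterlim, (ex_derive_continuous f).
    eexists; apply Hd; lra.
  - rewrite Heq, Rabs_mult, (Rabs_pos_eq (b - a)) by lra.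
    apply Rmult_le_compat_r. lra. apply HB; lra.
Qed.

Definition Cderive (f : R -> C) (t : R) (d : C) :=
  is_derive (fun s => fst (f s)) t (fst d) /\ is_derive (fun s => snd (f s)) t (snd d).

Lemma Cderive_minus f g t df dg :
  Cderive f t df -> Cderive g t dg -> Cderive (fun s => f s - g s)%C t (df - dg)%C.
Proof.
  intros [H1 H2] [H3 H4]; split; simpl.
  - apply (is_derive_minus (fun s => fst (f s)) (fun s => fst (g s))); auto.
  - apply (is_derive_minus (fun s => snd (f s)) (fun s => snd (g s))); auto.
Qed.

Lemma Cderive_plus f g t df dg :
  Cderive f t df -> Cderive g t dg -> Cderive (fun s => f s + g s)%C t (df + dg)%C.
Proof.
  intros [H1 H2] [H3 H4]; split; simpl.
  - apply (is_derive_plus (fun s => fst (f s)) (fun s => fst (g s))); auto.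
  - apply (is_derive_plus (fun s => snd (f s)) (fun s => snd (g s))); auto.
Qed.

Lemma Cderive_cexp (y : C) t : Cderive (fun s => cexp (RtoC s * y)) t (y * cexp (RtoC t * y))%C.
Proof.
  destruct y as [a b]. unfold cexp, Cexp, Defs.Re, Defs.Im. split; simpl.
  - apply is_derive_ext with (fun s => exp (s * a) * cos (s * b)).
    { intros s; simpl; rewrite !Rmult_0_l, Rminus_0_r, Rplus_0_r; reflexivity. }
    rewrite !Rmult_0_l, Rminus_0_r, Rplus_0_r. auto_derive; auto. ring.
  - apply is_derive_ext with (fun s => exp (s * a) * sin (s * b)).
    { intros s; simpl; rewrite !Rmult_0_l, Rminus_0_r, Rplus_0_r; reflexivity. }
    rewrite !Rmult_0_l, Rminus_0_r, Rplus_0_r. auto_derive; auto. ring.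
Qed.

Lemma is_derive_rsum_pow (c : nat -> R) n t :
  is_derive (fun s => rsum (fun k => s ^ k * c k) n) t
            (rsum (fun k => INR k * t ^ (pred k) * c k) n).
Proof.
  induction n; simpl. auto_derive; auto.
  apply (is_derive_plus (fun s => rsum (fun k => s ^ k * c k) n) (fun s => s ^ n * c n)).
  auto. auto_derive. auto. ring.
Qed.

Lemma Cderive_poly (c : nat -> C) n t :
  Cderive (fun s => csum (fun k => RtoC (s ^ k) * c k) n)%C t
          (csum (fun k => RtoC (INR k * t ^ (pred k)) * c k) n)%C.
Proof.
  split; [ apply is_derive_ext with (fun s => rsum (fun k => s ^ k * fst (c k)) n)
         | apply is_derive_ext with (fun s => rsum (fun k => s ^ k * snd (c k)) n) ];
    try (intros s; rewrite ?fst_csum, ?snd_csum; apply rsum_ext; intros; simpl; ring);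
    rewrite ?fst_csum, ?snd_csum;
    erewrite rsum_ext; try apply is_derive_rsum_pow; intros; simpl; ring.
Qed.

Lemma Cmod_le_abs_fst_snd (z : C) : Cmod z <= Rabs (fst z) + Rabs (snd z).
Proof.
  destruct z as [a b]; unfold Cmod; simpl.
  pose proof (Rabs_pos a); pose proof (Rabs_pos b).
  pose proof (Rsqr_abs a) as Ha; pose proof (Rsqr_abs b) as Hb. unfold Rsqr in Ha, Hb.
  apply Rsqr_incr_0_var; [ rewrite Rsqr_sqrt; unfold Rsqr; nra | lra ].
Qed.

(* Applied componentwise, hence the factor 2. *)
Lemma Cmod_MVT_le (f df : R -> C) t B : 0 <= t ->
  (forall s, 0 <= s <= t -> Cderive f s (df s)) ->
  (forall s, 0 <= s <= t -> Cmod (df s) <= B) -> Cmod (f t - f 0)%C <= 2 * B * t.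
Proof.
  intros Ht Hd HB. eapply Rle_trans. apply Cmod_le_abs_fst_snd.
  assert (Rabs (fst (f t) - fst (f 0)) <= B * (t - 0)).
  { apply (MVT_abs_le (fun s => fst (f s)) (fun s => fst (df s))). lra.
    - intros; apply Hd; lra.
    - intros x Hx. eapply Rle_trans. 2: apply (HB x Hx).
      eapply Rle_trans. 2: apply Rmax_Cmod. apply Rmax_l. }
  assert (Rabs (snd (f t) - snd (f 0)) <= B * (t - 0)).
  { apply (MVT_abs_le (fun s => snd (f s)) (fun s => snd (df s))). lra.
    - intros; apply Hd; lra.
    - intros x Hx. eapply Rle_trans. 2: apply (HB x Hx).
      eapply Rle_trans. 2: apply Rmax_Cmod. apply Rmax_r. }
  replace (fst (f t - f 0)%C) with (fst (f t) - fst (f 0)) by (simpl; ring).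
  replace (snd (f t - f 0)%C) with (snd (f t) - snd (f 0)) by (simpl; ring).
  lra.
Qed.

(** * Taylor remainder of the exponential *)

Definition exp_coef (y : C) (k : nat) : C := (Cpow y k * RtoC (/ INR (fact k)))%C.

Definition exp_taylor_rem (y : C) (n : nat) (t : R) : C :=
  (cexp (RtoC t * y) - csum (fun k => RtoC (t ^ k) * exp_coef y k) n)%C.

Lemma fact_neq0_R n : INR (fact n) <> 0.
Proof. apply not_0_INR, fact_neq_0. Qed.

Lemma derive_exp_taylor_poly y t n :
  csum (fun k => RtoC (INR k * t ^ (pred k)) * exp_coef y k)%C (S n) =
  (y * csum (fun k => RtoC (t ^ k) * exp_coef y k) n)%C.
Proof.
  induction n.
  - simpl. unfold exp_coef. rewrite Rmult_0_l. ring.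
  - cbn [csum] in *. rewrite IHn. cbn [csum pred]. unfold exp_coef.
    assert (Hr : INR (S n) * t ^ n * / INR (fact (S n)) = t ^ n * / INR (fact n)).
    { rewrite fact_simpl, mult_INR. pose proof (fact_neq0_R n).
      assert (INR (S n) <> 0) by (apply not_0_INR; lia). field; auto. }
    replace (RtoC (INR (S n) * t ^ n) * (Cpow y (S n) * RtoC (/ INR (fact (S n)))))%C
      with (RtoC (INR (S n) * t ^ n * / INR (fact (S n))) * Cpow y (S n))%C
      by (rewrite !RtoC_mult; ring).
    rewrite Hr, RtoC_mult. simpl Cpow. ring.
Qed.

Lemma Cderive_exp_taylor_rem y n t :
  Cderive (exp_taylor_rem y (S n)) t (y * exp_taylor_rem y n t)%C.
Proof.
  unfold exp_taylor_rem.
  replace (y * _)%C with (y * cexp (RtoC t * y) - y * csum (fun k => RtoC (t ^ k) * exp_coef y k) n)%C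
    by ring.
  rewrite <- derive_exp_taylor_poly. apply Cderive_minus. apply Cderive_cexp. apply Cderive_poly.
Qed.

Lemma exp_taylor_rem_at0 y n : exp_taylor_rem y (S n) 0 = RtoC 0.
Proof.
  unfold exp_taylor_rem. rewrite csum_recl, csum_0.
  - replace (RtoC 0 * y)%C with (RtoC 0) by ring. rewrite cexp_0.
    unfold exp_coef. simpl. rewrite Rinv_1. ring.
  - intros k _. simpl. rewrite Rmult_0_l. ring.
Qed.

Lemma Cmod_exp_taylor_rem_le y n t : 0 <= t <= 1 ->
  Cmod (exp_taylor_rem y n t) <= 2 ^ n * exp (Cmod y) * (t * Cmod y) ^ n.
Proof.
  revert t; induction n; intros t Ht.
  - unfold exp_taylor_rem; simpl csum.
    replace (cexp (RtoC t * y) - RtoC 0)%C with (cexp (RtoC t * y)) by ring.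
    rewrite Cmod_cexp. simpl pow.
    rewrite !Rmult_1_l, Rmult_1_r. apply exp_le_mono.
    pose proof (re_le_Cmod y) as H. destruct y as [a b]. simpl in *.
    pose proof (Rle_abs a). pose proof (Rabs_pos a).
    replace (t * a - 0 * b) with (t * a) by ring. destruct (Rle_dec 0 a); nra.
  - replace (exp_taylor_rem y (S n) t)
      with (exp_taylor_rem y (S n) t - exp_taylor_rem y (S n) 0)%C
      by (rewrite exp_taylor_rem_at0; ring).
    pose proof (Cmod_ge_0 y).
    eapply Rle_trans.
    { apply (Cmod_MVT_le _ (fun s => y * exp_taylor_rem y n s)%C t
               (Cmod y * (2 ^ n * exp (Cmod y) * (t * Cmod y) ^ n))).
      - lra.
      - intros; apply Cderive_exp_taylor_rem.
      - intros s Hs. rewrite Cmod_mult. apply Rmult_le_compat_l; auto.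
        eapply Rle_trans. apply IHn. lra.
        apply Rmult_le_compat_l. pose proof (exp_pos (Cmod y)). pose proof (pow_le 2 n). nra.
        apply pow_incr. split; [ nra | apply Rmult_le_compat_r; lra ]. }
    simpl pow. right; ring.
Qed.

(** * The Bernoulli generating function *)

Lemma length_bern_list k : length (bern_list k) = S k.
Proof. induction k; simpl; auto. rewrite length_app, IHk. simpl. lia. Qed.

Lemma nth_bern_list j k : (j <= k)%nat -> nth j (bern_list k) 0 = bernoulli j.
Proof.
  intros H. induction H. reflexivity.
  simpl. rewrite app_nth1; auto. rewrite length_bern_list. lia.
Qed.

Lemma bernoulliS k : bernoulli (S k) =
  - / INR (S k + 1) * rsum (fun j => Binomial.C (S k + 1) j * bernoulli j) (S k).
Proof.
  unfold bernoulli at 1. cbn [bern_list].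
  rewrite <- (length_bern_list k) at 1. rewrite nth_middle, fold_right_map_seq_R. f_equal.
  apply rsum_ext. intros j Hj. simpl. rewrite nth_bern_list; auto. lia.
Qed.

Definition bernoulli_coef (n : nat) : R := bernoulli n / INR (fact n).

Lemma bernoulli_coef0 : bernoulli_coef 0 = 1.
Proof. unfold bernoulli_coef, bernoulli. simpl. field. Qed.

Lemma bernoulli_coef1 : bernoulli_coef 1 = - / 2.
Proof. unfold bernoulli_coef, bernoulli. simpl. unfold Binomial.C. simpl. field. Qed.

Lemma bernoulli_coef_conv m : (1 <= m)%nat ->
  rsum (fun j => bernoulli_coef j / INR (fact (S m - j))) (S m) = 0.
Proof.
  intros Hm. destruct m as [|k]. lia.
  pose proof (bernoulliS k) as Hb. rewrite Nat.add_1_r in Hb.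
  rewrite (rsum_ext _ (fun j => INR (fact (S (S k))) *
             (bernoulli_coef j / INR (fact (S (S k) - j))))) in Hb.
  2: { intros j Hj. unfold Binomial.C, bernoulli_coef.
       pose proof (fact_neq0_R j); pose proof (fact_neq0_R (S (S k) - j)). field. auto. }
  change (rsum ?f (S (S k))) with (rsum f (S k) + f (S k)); cbv beta.
  replace (S (S k) - S k)%nat with 1%nat by lia.
  rewrite rsumZ in Hb. unfold bernoulli_coef at 2. rewrite Hb, !fact_simpl, !mult_INR.
  change (INR 1 * INR (fact 0)) with (1 * 1). pose proof (fact_neq0_R k).
  assert (INR (S k) <> 0) by (apply not_0_INR; lia).
  assert (INR (S (S k)) <> 0) by (apply not_0_INR; lia).
  set (s := rsum _ _). field. auto.
Qed.

Definition exp_taylor (y : C) (j : nat) : C := csum (exp_coef y) (S j).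

Lemma exp_taylor0 y : exp_taylor y 0 = RtoC 1.
Proof. unfold exp_taylor, exp_coef; simpl. rewrite Rinv_1. ring. Qed.

Lemma exp_taylor_rem_at1 y j : exp_taylor_rem y (S j) 1 = (cexp y - exp_taylor y j)%C.
Proof.
  unfold exp_taylor_rem, exp_taylor. rewrite Cmult_1_l. f_equal.
  apply csum_ext. intros k _. rewrite pow1. ring.
Qed.

(* Truncation of [(y / (e^y - 1)) * (e^y - 1) = y]. *)
Lemma bernoulli_coef_exp_taylor y L :
  csum (fun n => RtoC (bernoulli_coef n) * Cpow y n * (exp_taylor y (S L - n) - 1))%C (S L) = y.
Proof.
  induction L.
  - simpl. rewrite bernoulli_coef0. unfold exp_taylor, exp_coef. simpl. rewrite !Rinv_1. ring.
  - rewrite (csum_ext _ (fun n => (RtoC (bernoulli_coef n) * Cpow y n * (exp_taylor y (S L - n) - 1)) +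
        RtoC (bernoulli_coef n / INR (fact (S (S L) - n))) * Cpow y (S (S L)))%C).
    + rewrite csumD, csumZr, csum_RtoC, bernoulli_coef_conv by lia.
      change (csum ?f (S (S L))) with (csum f (S L) + f (S L))%C; cbv beta.
      rewrite IHL, Nat.sub_diag, exp_taylor0. ring.
    + intros n Hn. replace (S (S L) - n)%nat with (S (S L - n)) by lia.
      change (exp_taylor y (S (S L - n))) with (exp_taylor y (S L - n) + exp_coef y (S (S L - n)))%C.
      unfold exp_coef.
      replace (Cpow y (S (S L))) with (Cpow y n * Cpow y (S (S L - n)))%C
        by (rewrite <- Cpow_add_r; f_equal; lia).
      unfold Rdiv. rewrite RtoC_mult. ring.
Qed.

Definition bernoulli_gf (L : nat) (y : C) : C :=
  csum (fun n => RtoC (bernoulli_coef n) * Cpow y n)%C (S L).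

Lemma bernoulli_gf_defect y L : (y - (cexp y - 1) * bernoulli_gf L y)%C =
  (- csum (fun n => RtoC (bernoulli_coef n) * Cpow y n * exp_taylor_rem y (S (S L - n)) 1)
          (S L))%C.
Proof.
  rewrite <- (bernoulli_coef_exp_taylor y L) at 1. unfold bernoulli_gf.
  rewrite Cmult_comm, <- csumZr, <- csumB, <- csumN.
  apply csum_ext. intros n _. rewrite exp_taylor_rem_at1. ring.
Qed.

Definition bernoulli_abs_sum (L : nat) : R := rsum (fun n => Rabs (bernoulli_coef n)) (S L).

Lemma bernoulli_abs_sum_ge0 L : 0 <= bernoulli_abs_sum L.
Proof. apply rsum_ge0. intros; apply Rabs_pos. Qed.

Lemma Cmod_bernoulli_gf_defect_le y L : Cmod y <= 1 ->
  Cmod (y - (cexp y - 1) * bernoulli_gf L y)%C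
  <= bernoulli_abs_sum L * 2 ^ (S (S L)) * 3 * Cmod y ^ (S (S L)).
Proof.
  intros Hy. rewrite bernoulli_gf_defect, Cmod_opp. eapply Rle_trans. apply Cmod_csum_le.
  unfold bernoulli_abs_sum. rewrite <- !rsumZr. apply rsum_le. intros n Hn.
  rewrite !Cmod_mult, Cmod_R, Cmod_pow. pose proof (Cmod_ge_0 y) as H0.
  pose proof (Rabs_pos (bernoulli_coef n)). pose proof (pow_le _ n H0).
  eapply Rle_trans.
  { apply Rmult_le_compat_l. nra. apply Cmod_exp_taylor_rem_le. lra. }
  rewrite Rmult_1_l.
  replace (Cmod y ^ S (S L)) with (Cmod y ^ n * Cmod y ^ S (S L - n))
    by (rewrite <- pow_add; f_equal; lia).
  assert (2 ^ S (S L - n) <= 2 ^ S (S L)) by (apply Rle_pow; lia || lra).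
  assert (exp (Cmod y) <= 3) by (eapply Rle_trans; [apply exp_le_mono, Hy | apply exp_le_3]).
  pose proof (pow_le _ (S (S L - n)) H0). pose proof (exp_pos (Cmod y)).
  pose proof (pow_le 2 (S (S L - n))).
  set (a := Rabs (bernoulli_coef n)) in *. set (p := Cmod y ^ n) in *.
  set (q := Cmod y ^ S (S L - n)) in *.
  apply Rle_trans with (a * p * (2 ^ S (S L) * 3 * q)); [|right; ring].
  apply Rmult_le_compat_l. nra. apply Rmult_le_compat_r. auto. apply Rmult_le_compat; lra.
Qed.

Lemma Cmod_cexp_sub1_ge y : Re y < 0 -> - Re y / (1 - Re y) <= Cmod (cexp y - 1)%C.
Proof.
  intros Hy.
  assert (H1 : Cmod (RtoC 1) <= Cmod (cexp y) + Cmod (cexp y - 1)%C).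
  { set (E := (cexp y - 1)%C). replace (RtoC 1) with (cexp y + - E)%C by (unfold E; ring).
    rewrite <- (Cmod_opp E). apply Cmod_triangle. }
  rewrite Cmod_1, Cmod_cexp in H1.
  pose proof (exp_ineq1_le (- Re y)). pose proof (exp_pos (- Re y)).
  replace (Re y) with (- - Re y) in H1 by ring. rewrite exp_Ropp in H1.
  assert (/ exp (- Re y) <= / (1 - Re y)) by (apply Rinv_le_contravar; lra).
  replace (- Re y / (1 - Re y)) with (1 - / (1 - Re y)) by (field; lra). lra.
Qed.

Lemma Cmod_bernoulli_gf_le L y : 1 <= Cmod y ->
  Cmod (bernoulli_gf L y) <= bernoulli_abs_sum L * Cmod y ^ L.
Proof.
  intros Hy. unfold bernoulli_gf, bernoulli_abs_sum.
  eapply Rle_trans. apply Cmod_csum_le. rewrite <- rsumZr.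
  apply rsum_le. intros n Hn. rewrite Cmod_mult, Cmod_R, Cmod_pow.
  apply Rmult_le_compat_l. apply Rabs_pos. apply Rle_pow; auto. lia.
Qed.

Definition bernoulli_gf_rem (L : nat) (y : C) : C := (/ (cexp y - 1) - bernoulli_gf L y / y)%C.

Section BernoulliRemainderInSector.

Variables (L : nat) (m : R) (y : C).
Hypotheses (Hm : 0 < m) (Hy : Re y < 0) (Hsector : Cmod y <= m * - Re y).

Lemma sector_bounds : 0 < - Re y /\ - Re y <= Cmod y /\ 0 < Cmod y.
Proof. pose proof (re_le_Cmod y) as H. rewrite Rabs_left in H by lra. lra. Qed.

Lemma Cmod_bernoulli_gf_rem_le_small : Cmod y <= 1 ->
  Cmod (bernoulli_gf_rem L y) <= 2 * m * (bernoulli_abs_sum L * 2 ^ S (S L) * 3) * Cmod y ^ L.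
Proof.
  destruct sector_bounds as (Ha & Has & Hs0).
  set (s := Cmod y) in *. set (a := - Re y) in *. intros Hs1.
  set (K1 := bernoulli_abs_sum L * 2 ^ S (S L) * 3).
  assert (HK1 : 0 <= K1).
  { pose proof (bernoulli_abs_sum_ge0 L). pose proof (pow_le 2 (S (S L))). unfold K1. nra. }
  assert (Hy0 : y <> RtoC 0) by (intros E; unfold s in Hs0; rewrite E, Cmod_0 in Hs0; lra).
  pose proof (cexp_sub1_neq0 y ltac:(lra)) as HE0.
  assert (HEl : s / (2 * m) <= Cmod (cexp y - 1)%C).
  { pose proof (Cmod_cexp_sub1_ge y Hy) as HE.
    replace (- Re y / (1 - Re y)) with (a / (1 + a)) in HE by (unfold a; field; lra).
    apply Rle_trans with (a / 2).
    - apply Rmult_le_reg_r with (2 * m). lra. field_simplify; nra.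
    - eapply Rle_trans; [|exact HE].
      apply Rmult_le_compat_l. lra. apply Rinv_le_contravar; lra. }
  assert (0 < s / (2 * m)) by (apply Rdiv_lt_0_compat; lra).
  replace (bernoulli_gf_rem L y)
    with ((y - (cexp y - 1) * bernoulli_gf L y) / (y * (cexp y - 1)))%C
    by (unfold bernoulli_gf_rem; field; auto).
  rewrite Cmod_div, Cmod_mult by (apply Cmult_neq_0; auto).
  apply Rle_trans with (K1 * s ^ S (S L) / (s * (s / (2 * m)))).
  - unfold Rdiv. apply Rmult_le_compat.
    + apply Cmod_ge_0.
    + left; apply Rinv_0_lt_compat. change (Cmod y) with s. nra.
    + apply Cmod_bernoulli_gf_defect_le. change (Cmod y) with s. lra.
    + unfold Rdiv in *. apply Rinv_le_contravar. nra.
      change (Cmod y) with s. apply Rmult_le_compat_l; lra.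
  - right. simpl. field. lra.
Qed.

Lemma Cmod_bernoulli_gf_rem_le_large : 1 < Cmod y ->
  Cmod (bernoulli_gf_rem L y) <= (m + 1 + bernoulli_abs_sum L) * Cmod y ^ L.
Proof.
  destruct sector_bounds as (Ha & Has & Hs0).
  set (s := Cmod y) in *. set (a := - Re y) in *. intros Hs1.
  pose proof (cexp_sub1_neq0 y ltac:(lra)) as HE0.
  assert (Hy0 : y <> RtoC 0) by (intros E; unfold s in Hs0; rewrite E, Cmod_0 in Hs0; lra).
  assert (Hinv : / Cmod (cexp y - 1)%C <= m + 1).
  { pose proof (Cmod_cexp_sub1_ge y Hy) as HE.
    replace (- Re y / (1 - Re y)) with (a / (1 + a)) in HE by (unfold a; field; lra).
    assert (1 / m <= a) by (apply Rmult_le_reg_r with m; auto; field_simplify; nra).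
    apply Rle_trans with (/ (a / (1 + a))).
    - apply Rinv_le_contravar; auto. apply Rdiv_lt_0_compat; lra.
    - replace (/ (a / (1 + a))) with (1 + / a) by (field; lra).
      assert (/ a <= m); [|lra].
      replace m with (/ (1 / m)) by (field; lra). apply Rinv_le_contravar; auto.
      apply Rdiv_lt_0_compat; lra. }
  assert (HQ : Cmod (bernoulli_gf L y) / s <= bernoulli_abs_sum L * s ^ L).
  { pose proof (Cmod_bernoulli_gf_le L y ltac:(change (Cmod y) with s; lra)) as HQ.
    change (Cmod y) with s in HQ.
    pose proof (Cmod_ge_0 (bernoulli_gf L y)).
    assert (/ s <= 1) by (rewrite <- Rinv_1; apply Rinv_le_contravar; lra).
    unfold Rdiv. nra. }
  unfold bernoulli_gf_rem. eapply Rle_trans. apply Cmod_triangle.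
  rewrite Cmod_opp, Cmod_inv, Cmod_div by auto. change (Cmod y) with s.
  assert (1 <= s ^ L) by (apply pow_R1_Rle; lra). nra.
Qed.

End BernoulliRemainderInSector.

Lemma Cmod_bernoulli_gf_rem_le L m : 0 < m -> exists A, 0 <= A /\
  forall y : C, Re y < 0 -> Cmod y <= m * - Re y -> Cmod (bernoulli_gf_rem L y) <= A * Cmod y ^ L.
Proof.
  intros Hm. set (K1 := bernoulli_abs_sum L * 2 ^ S (S L) * 3).
  pose proof (bernoulli_abs_sum_ge0 L). pose proof (pow_le 2 (S (S L))).
  assert (0 <= K1) by (unfold K1; nra).
  assert (0 <= 2 * m * K1) by nra.
  exists (2 * m * K1 + (m + 1 + bernoulli_abs_sum L)). split. nra.
  intros y Hy Hsec. pose proof (pow_le (Cmod y) L (Cmod_ge_0 y)).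
  destruct (Rle_lt_dec (Cmod y) 1) as [Hs | Hs].
  - eapply Rle_trans. apply (Cmod_bernoulli_gf_rem_le_small L m y); auto. fold K1. nra.
  - eapply Rle_trans. apply (Cmod_bernoulli_gf_rem_le_large L m y); auto. nra.
Qed.

(** * Series and polylogarithms *)

Lemma sum_n_Cpartial (f : nat -> C) m : sum_n f m = Cpartial f m.
Proof. induction m. rewrite sum_O; reflexivity. rewrite sum_Sn, IHm; reflexivity. Qed.

Lemma sum_n_csum (f : nat -> C) n : sum_n f n = csum f (S n).
Proof. induction n. rewrite sum_O. simpl. ring. rewrite sum_Sn, IHn. reflexivity. Qed.

Lemma is_series_Cseries_cv (f : nat -> C) l : is_series f l -> Cseries_cv f l.
Proof.
  intros H0. pose proof (proj1 (filterlim_locally _ _) H0) as H.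
  assert (H2 : forall eps, 0 < eps ->
            exists N, forall n, (N <= n)%nat -> Cmod (Cpartial f n - l) < eps).
  { intros eps Heps. destruct (H (mkposreal (eps / 2) ltac:(lra))) as [N HN].
    exists N. intros n Hn. specialize (HN n Hn).
    apply C_NormedModule_mixin_compat2 in HN. simpl in HN. rewrite sum_n_Cpartial in HN.
    eapply Rlt_le_trans. apply HN.
    assert (sqrt 2 < 2) by (rewrite <- (sqrt_square 2) at 2 by lra; apply sqrt_lt_1; lra).
    nra. }
  split; intros eps Heps; destruct (H2 eps Heps) as [N HN]; exists N; intros n Hn;
    specialize (HN n Hn); unfold R_dist; eapply Rle_lt_trans; try apply HN;
    eapply Rle_trans; try apply Rmax_Cmod; [apply Rmax_l | apply Rmax_r].
Qed.

Lemma is_series_Cseries (f : nat -> C) l : is_series f l -> Cseries f = l.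
Proof.
  intros H. apply is_series_Cseries_cv in H. unfold Cseries.
  pose proof (epsilon_spec (inhabits (Defs.RtoC 0)) (fun l => Cseries_cv f l)
                (ex_intro _ l H)) as H2.
  destruct H as [Ha Hb]; destruct H2 as [H2a H2b].
  apply injective_projections; eapply UL_sequence; eauto.
Qed.

Lemma ex_series_is_Cseries (a : nat -> C) : ex_series a -> is_series a (Cseries a).
Proof. intros [l H]. rewrite (is_series_Cseries a l H). auto. Qed.

Lemma is_series_Cmod_le (a : nat -> C) (b : nat -> R) l s :
  is_series a l -> is_series b s -> (forall n, Cmod (a n) <= b n) -> Cmod l <= s.
Proof.
  intros Ha Hb H.
  assert (H1 : is_lim_seq (fun n => norm (sum_n a n)) (norm l))
    by (eapply filterlim_comp; [apply Ha | apply filterlim_norm]).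
  assert (H3 : forall n, norm (sum_n a n) <= sum_n b n).
  { intros n. eapply Rle_trans.
    - exact (norm_sum_n_m (K := C_AbsRing) (V := C_NormedModule) a 0 n).
    - apply sum_n_m_le. exact H. }
  exact (is_lim_seq_le _ _ _ _ H3 H1 (Hb : is_lim_seq (sum_n b) s)).
Qed.

Lemma is_series_csum (f : nat -> nat -> C) (F : nat -> C) n :
  (forall i, (i < n)%nat -> is_series (f i) (F i)) ->
  is_series (fun k => csum (fun i => f i k) n) (csum F n).
Proof.
  induction n; intros H; simpl.
  - apply filterlim_ext with (fun _ => RtoC 0).
    + intros k. rewrite sum_n_csum. symmetry. apply csum_0. auto.
    + apply filterlim_const.
  - apply (is_series_plus (fun k => csum (fun i => f i k) n) (f n)); auto.
Qed.

Lemma ex_series_pow_geom k q : 0 < q < 1 -> ex_series (fun n => INR (S n) ^ k * q ^ S n).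
Proof.
  intros Hq. apply ex_series_Rabs. apply ex_series_DAlembert with q. lra.
  - intros n. apply Rmult_integral_contrapositive; split; apply pow_nonzero.
    apply not_0_INR; lia. lra.
  - apply is_lim_seq_ext with (fun n => (1 + / INR (S n)) ^ k * q).
    + intros n. assert (0 < INR (S n)) by (apply lt_0_INR; lia).
      assert (INR (S n) ^ k <> 0) by (apply pow_nonzero; lra).
      assert (q ^ S n <> 0) by (apply pow_nonzero; lra).
      rewrite Rabs_pos_eq.
      * rewrite (S_INR (S n)), <- (tech_pow_Rmult q (S n)).
        replace (INR (S n) + 1) with (INR (S n) * (1 + / INR (S n))) by (field; lra).
        rewrite Rpow_mult_distr. field. auto.
      * apply Rle_mult_inv_pos.
        apply Rmult_le_pos; apply pow_le; try lra. apply pos_INR.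
        apply Rmult_lt_0_compat; apply pow_lt; lra.
    + assert (H0 : is_lim_seq (fun n => / INR (S n)) 0).
      { replace (Finite 0) with (Rbar_inv p_infty) by reflexivity.
        apply is_lim_seq_inv. apply (is_lim_seq_incr_1 INR). apply is_lim_seq_INR. discriminate. }
      pose proof (is_lim_seq_plus' _ _ 1 0 (is_lim_seq_const 1) H0) as H1.
      rewrite Rplus_0_r in H1.
      assert (Hpow : forall j, is_lim_seq (fun n => (1 + / INR (S n)) ^ j) 1).
      { induction j; simpl. apply is_lim_seq_const.
        pose proof (is_lim_seq_mult' _ _ _ _ H1 IHj) as H; rewrite Rmult_1_r in H; exact H. }
      pose proof (is_lim_seq_mult' _ _ _ _ (Hpow k) (is_lim_seq_const q)) as H.
      rewrite Rmult_1_l in H. exact H.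
Qed.

Definition polylog_term (s : Z) (u : C) (n : nat) : C :=
  (Cpow u (S n) * RtoC (powerRZ (INR (S n)) (- s)))%C.

Lemma powerRZ_le_pow r k : 1 <= r -> powerRZ r k <= r ^ Z.to_nat k.
Proof.
  intros Hr. destruct k as [|p|p]; simpl; try lra.
  rewrite <- Rinv_1. apply Rinv_le_contravar. lra. apply pow_R1_Rle. lra.
Qed.

Lemma Cmod_polylog_term_le s u q n : Cmod u <= q ->
  Cmod (polylog_term s u n) <= INR (S n) ^ Z.to_nat (- s) * q ^ S n.
Proof.
  intros Hu. unfold polylog_term.
  assert (Hn : 1 <= INR (S n)) by (apply (le_INR 1); lia).
  rewrite Cmod_mult, Cmod_R, Cmod_pow, Rabs_pos_eq, Rmult_comm
    by (apply powerRZ_le; lra).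
  apply Rmult_le_compat.
  - apply powerRZ_le; lra.
  - apply pow_le, Cmod_ge_0.
  - apply powerRZ_le_pow; lra.
  - apply pow_incr. split; auto. apply Cmod_ge_0.
Qed.

Lemma is_series_Li s u : Cmod u < 1 -> is_series (polylog_term s u) (Li s u).
Proof.
  intros Hu. apply ex_series_is_Cseries.
  pose proof (Cmod_ge_0 u).
  apply (ex_series_le (polylog_term s u) (fun n => INR (S n) ^ Z.to_nat (- s) * ((1 + Cmod u) / 2) ^ S n)).
  - intros n. apply Cmod_polylog_term_le. lra.
  - apply ex_series_pow_geom. lra.
Qed.

Lemma is_series_eq_of_partial_bound (a : nat -> C) (l c : C) (b : nat -> R) :
  is_series a l -> is_lim_seq b 0 -> (forall M, Cmod (c + sum_n a M)%C <= b M) -> l = (- c)%C.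
Proof.
  intros Ha Hb Hbound.
  assert (Hlim : is_lim_seq (fun M => norm (plus c (sum_n a M))) (norm (plus c l))).
  { eapply filterlim_comp; [|apply filterlim_norm].
    apply (filterlim_comp_2 (G := locally c) (H := locally l) (fun _ => c) (sum_n a) plus);
      [apply filterlim_const | apply Ha | exact (filterlim_plus (V := C_NormedModule) c l)]. }
  assert (H0 : norm (plus c l) = 0).
  { apply Rle_antisym.
    - apply (is_lim_seq_le _ _ _ _ Hbound Hlim Hb).
    - apply (is_lim_seq_le _ _ _ _ (fun M => norm_ge_0 _) (is_lim_seq_const 0) Hlim). }
  apply norm_eq_zero in H0. change ((c + l)%C = RtoC 0) in H0.
  transitivity ((c + l) - c)%C. ring. rewrite H0. ring.
Qed.

(** * The logarithm series *)

Lemma is_derive_ln_norm_one_sub a b t : 0 < 1 - t * a ->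
  is_derive (fun s => ln (sqrt ((1 - s * a) ^ 2 + (s * b) ^ 2))) t
    ((- a + t * (a * a + b * b)) / ((1 - t * a) ^ 2 + (t * b) ^ 2)).
Proof.
  intros H. assert (0 < (1 - t * a) ^ 2 + (t * b) ^ 2) by nra.
  auto_derive.
  - split. lra. split. apply sqrt_lt_R0; lra. auto.
  - replace ((1 + - (t * a)) * ((1 + - (t * a)) * 1) + t * b * (t * b * 1))
      with ((1 - t * a) ^ 2 + (t * b) ^ 2) by ring.
    set (Q := (1 - t * a) ^ 2 + (t * b) ^ 2) in *.
    assert (Hr : 0 < sqrt Q) by (apply sqrt_lt_R0; lra).
    assert (HQ : Q = sqrt Q * sqrt Q) by (rewrite sqrt_sqrt; lra).
    set (r := sqrt Q) in *. clearbody r. rewrite HQ. field. lra.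
Qed.

Lemma is_derive_atan_one_sub a b t : 0 < 1 - t * a ->
  is_derive (fun s => atan (- (s * b) / (1 - s * a))) t (- b / ((1 - t * a) ^ 2 + (t * b) ^ 2)).
Proof.
  intros H. assert (0 < (1 - t * a) ^ 2 + (t * b) ^ 2) by nra.
  auto_derive. lra. field. split; lra.
Qed.

Lemma fst_opp_div_one_sub u t : 0 < 1 - t * fst u ->
  fst (- u / (1 - RtoC t * u))%C = (- fst u + t * (fst u * fst u + snd u * snd u))
                                   / ((1 - t * fst u) ^ 2 + (t * snd u) ^ 2).
Proof.
  destruct u as [a b]; simpl; intros H. assert (0 < (1 - t * a) ^ 2 + (t * b) ^ 2) by nra.
  field; repeat split; nra.
Qed.

Lemma snd_opp_div_one_sub u t : 0 < 1 - t * fst u ->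
  snd (- u / (1 - RtoC t * u))%C = - snd u / ((1 - t * fst u) ^ 2 + (t * snd u) ^ 2).
Proof.
  destruct u as [a b]; simpl; intros H. assert (0 < (1 - t * a) ^ 2 + (t * b) ^ 2) by nra.
  field; repeat split; nra.
Qed.

Section LogOneSub.

Variable u : C.
Hypothesis Hu : Cmod u < 1.

(* [log (1 - t u)] written through [ln |1 - t u|] and the [atan] form of its argument. *)
Definition log_one_sub_path (t : R) : C :=
  (ln (sqrt ((1 - t * fst u) ^ 2 + (t * snd u) ^ 2)), atan (- (t * snd u) / (1 - t * fst u))).

Lemma one_sub_re_pos t : 0 <= t <= 1 -> 0 < 1 - t * fst u.
Proof.
  intros Ht. pose proof (re_le_Cmod u). pose proof (Rle_abs (fst u)).
  change (Re u) with (fst u) in *. destruct (Rle_dec 0 (fst u)); nra.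
Qed.

Lemma Cmod_one_sub_ge t : 0 <= t <= 1 -> 1 - Cmod u <= Cmod (1 - RtoC t * u)%C.
Proof.
  intros Ht.
  assert (H : Cmod (RtoC 1) <= Cmod (1 - RtoC t * u)%C + Cmod (RtoC t * u)%C).
  { set (w := (1 - RtoC t * u)%C). replace (RtoC 1) with (w + RtoC t * u)%C by (unfold w; ring).
    apply Cmod_triangle. }
  rewrite Cmod_mult, !Cmod_R, Rabs_R1, (Rabs_pos_eq t) in H by lra.
  pose proof (Cmod_ge_0 u). nra.
Qed.

Lemma one_sub_neq0 t : 0 <= t <= 1 -> (1 - RtoC t * u)%C <> RtoC 0.
Proof. intros Ht E. pose proof (Cmod_one_sub_ge t Ht). rewrite E, Cmod_0 in H. lra. Qed.

Lemma Cderive_log_one_sub_path t : 0 <= t <= 1 ->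
  Cderive log_one_sub_path t (- u / (1 - RtoC t * u))%C.
Proof.
  intros Ht. pose proof (one_sub_re_pos t Ht).
  split; [rewrite fst_opp_div_one_sub | rewrite snd_opp_div_one_sub]; auto.
  - apply is_derive_ln_norm_one_sub; auto.
  - apply is_derive_atan_one_sub; auto.
Qed.

Definition log_poly_coef (k : nat) : C :=
  match k with O => RtoC 0 | S j => (Cpow u (S j) * RtoC (/ INR (S j)))%C end.

(* At [t = 1]: the [M]-th partial sum of [- log (1 - u) = sum_(k >= 1) u^k / k]. *)
Definition log_poly (M : nat) (t : R) : C := csum (fun k => RtoC (t ^ k) * log_poly_coef k)%C (S M).

Definition geom_poly (M : nat) (t : R) : C := csum (fun k => RtoC (t ^ k) * Cpow u (S k))%C M.

Lemma Cderive_log_poly M t : Cderive (log_poly M) t (geom_poly M t).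
Proof.
  replace (geom_poly M t)
    with (csum (fun k => RtoC (INR k * t ^ pred k) * log_poly_coef k)%C (S M)).
  { apply Cderive_poly. }
  rewrite csum_recl. simpl (log_poly_coef 0). rewrite Cmult_0_r, Cplus_0_l.
  apply csum_ext. intros k _. cbn [log_poly_coef pred].
  assert (INR (S k) <> 0) by (apply not_0_INR; lia).
  replace (RtoC (INR (S k) * t ^ k) * (Cpow u (S k) * RtoC (/ INR (S k))))%C
    with (RtoC (INR (S k) * / INR (S k)) * RtoC (t ^ k) * Cpow u (S k))%C
    by (rewrite !RtoC_mult; ring).
  rewrite Rinv_r by auto. ring.
Qed.

Lemma geom_poly_eq M t : 0 <= t <= 1 ->
  (- u / (1 - RtoC t * u) + geom_poly M t)%C = (- u * Cpow (RtoC t * u) M / (1 - RtoC t * u))%C.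
Proof.
  intros Ht. pose proof (one_sub_neq0 t Ht).
  assert (Hg : (geom_poly M t * (1 - RtoC t * u))%C = (u * (1 - Cpow (RtoC t * u) M))%C).
  { induction M; unfold geom_poly in *. simpl. ring.
    change (csum ?f (S M)) with (csum f M + f M)%C.
    rewrite Cmult_plus_distr_r, IHM, !Cpow_mult_l, <- !RtoC_pow. cbn [Cpow pow].
    rewrite RtoC_mult. ring. }
  replace (geom_poly M t) with (u * (1 - Cpow (RtoC t * u) M) / (1 - RtoC t * u))%C
    by (rewrite <- Hg; field; auto).
  field. auto.
Qed.

Lemma log_one_sub_path_at0 : log_one_sub_path 0 = RtoC 0.
Proof.
  unfold log_one_sub_path. rewrite !Rmult_0_l, Rminus_0_r, pow_i, Rplus_0_r, pow1, sqrt_1, ln_1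
    by lia.
  unfold Rdiv. rewrite Ropp_0, Rmult_0_l, atan_0. reflexivity.
Qed.

Lemma log_poly_at0 M : log_poly M 0 = RtoC 0.
Proof.
  unfold log_poly. rewrite csum_recl, csum_0.
  - simpl. ring.
  - intros k _. simpl. rewrite Rmult_0_l. ring.
Qed.

Lemma log_poly_at1 M : log_poly M 1 = csum (polylog_term 1 u) M.
Proof.
  unfold log_poly. rewrite csum_recl. simpl (log_poly_coef 0). rewrite Cmult_0_r, Cplus_0_l.
  apply csum_ext. intros k _. unfold polylog_term. cbn [log_poly_coef]. rewrite pow1, Cmult_1_l.
  f_equal. f_equal. simpl. rewrite Rmult_1_r. reflexivity.
Qed.

(* By the mean value theorem: the derivative of [log (1 - t u) + log_poly M t] is
   [- u (t u)^M / (1 - t u)]. *)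
Lemma Cmod_log_path_partial_le M :
  Cmod (log_one_sub_path 1 + csum (polylog_term 1 u) M)%C
  <= 2 * (Cmod u ^ S M / (1 - Cmod u)).
Proof.
  pose proof (Cmod_ge_0 u).
  set (h := fun t => (log_one_sub_path t + log_poly M t)%C).
  replace (log_one_sub_path 1 + csum (polylog_term 1 u) M)%C with (h 1 - h 0)%C
    by (unfold h; rewrite log_one_sub_path_at0, log_poly_at0, log_poly_at1; ring).
  replace (2 * (Cmod u ^ S M / (1 - Cmod u))) with (2 * (Cmod u ^ S M / (1 - Cmod u)) * 1) by ring.
  apply (Cmod_MVT_le h (fun t => - u * Cpow (RtoC t * u) M / (1 - RtoC t * u))%C). lra.
  - intros t Ht. unfold h. rewrite <- geom_poly_eq by auto.
    apply Cderive_plus. apply Cderive_log_one_sub_path; auto. apply Cderive_log_poly.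
  - intros t Ht. pose proof (Cmod_one_sub_ge t Ht). pose proof (one_sub_neq0 t Ht).
    rewrite Cmod_div, Cmod_mult, Cmod_opp, Cmod_pow, Cmod_mult, Cmod_R, Rabs_pos_eq by (auto || lra).
    simpl pow. unfold Rdiv. apply Rmult_le_compat.
    + apply Rmult_le_pos; auto. apply pow_le. nra.
    + left; apply Rinv_0_lt_compat; lra.
    + apply Rmult_le_compat_l; auto. apply pow_incr. nra.
    + apply Rinv_le_contravar; lra.
Qed.

End LogOneSub.

Lemma Clog_one_sub_eq_path u : Cmod u < 1 -> Clog (Csub (Defs.RtoC 1) u) = log_one_sub_path u 1.
Proof.
  intros Hu. pose proof (one_sub_re_pos u Hu 1 ltac:(lra)) as Ha.
  unfold Clog, log_one_sub_path, Cnorm, Carg, Defs.Csub, Defs.Cadd, Defs.Copp, Defs.RtoC,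
    Defs.Re, Defs.Im.
  cbn [fst snd]. rewrite !Rmult_1_l in *.
  destruct (Rlt_dec 0 (1 + - fst u)) as [_|Hn]; [|lra].
  f_equal; [f_equal; f_equal; ring | f_equal; field; lra].
Qed.

Lemma Clog_one_sub u : Cmod u < 1 -> Clog (Csub (Defs.RtoC 1) u) = (- Li 1 u)%C.
Proof.
  intros Hu. pose proof (Cmod_ge_0 u).
  rewrite Clog_one_sub_eq_path by auto.
  rewrite (is_series_eq_of_partial_bound (polylog_term 1 u) (Li 1 u) (log_one_sub_path u 1)
             (fun M => 2 / (1 - Cmod u) * Cmod u ^ M)).
  - change (@eq C (log_one_sub_path u 1) (- - log_one_sub_path u 1)%C). ring.
  - apply is_series_Li; auto.
  - replace (Finite 0) with (Rbar_mult (2 / (1 - Cmod u)) 0) by (simpl; f_equal; ring).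
    apply is_lim_seq_scal_l, is_lim_seq_geom. rewrite Rabs_pos_eq; auto.
  - intros M. rewrite sum_n_csum. eapply Rle_trans. apply Cmod_log_path_partial_le; auto.
    assert (Cmod u ^ S (S M) <= Cmod u ^ M).
    { replace (Cmod u ^ S (S M)) with (Cmod u ^ M * (Cmod u * Cmod u)) by (simpl; ring).
      pose proof (pow_le _ M H). assert (Cmod u * Cmod u <= 1) by nra. nra. }
    unfold Rdiv. apply Rle_trans with (2 * (Cmod u ^ M * / (1 - Cmod u))).
    + apply Rmult_le_compat_l. lra. apply Rmult_le_compat_r; auto.
      left; apply Rinv_0_lt_compat; lra.
    + right; ring.
Qed.

(** * Expansion of chi *)

Definition bernoulli_gf_tail (L : nat) (y : C) : C :=
  csum (fun i => RtoC (bernoulli_coef (2 + i)) * Cpow y (S i))%C (L - 1).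

Lemma bernoulli_gf_split L y : (1 <= L)%nat ->
  bernoulli_gf L y = (1 - RtoC (/ 2) * y + y * bernoulli_gf_tail L y)%C.
Proof.
  intros HL. unfold bernoulli_gf, bernoulli_gf_tail. replace (S L) with (S (S (L - 1))) by lia.
  rewrite !csum_recl, <- csumZ, bernoulli_coef0, bernoulli_coef1, RtoC_opp.
  replace (csum (fun k => RtoC (bernoulli_coef (S (S k))) * Cpow y (S (S k)))%C (L - 1))
    with (csum (fun i => y * (RtoC (bernoulli_coef (2 + i)) * Cpow y (S i)))%C (L - 1))
    by (apply csum_ext; intros; simpl; ring).
  simpl. ring.
Qed.

Lemma inv_cexp_opp_sub1 L y : (1 <= L)%nat -> Re y < 0 ->
  (/ (cexp (- y) - 1))%C =
  (- (/ y + RtoC (/ 2) + bernoulli_gf_tail L y + bernoulli_gf_rem L y))%C.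
Proof.
  intros HL Hy. pose proof (cexp_sub1_neq0 y ltac:(lra)). pose proof (cexp_neq0 y).
  assert (y <> RtoC 0) by (intros E; rewrite E in Hy; simpl in Hy; lra).
  assert (HE : (1 - cexp y)%C <> RtoC 0)
    by (intros E; apply H; replace (cexp y - 1)%C with (- (1 - cexp y))%C by ring;
        rewrite E; ring).
  unfold bernoulli_gf_rem. rewrite bernoulli_gf_split, cexp_opp by auto.
  rewrite RtoC_inv by lra. field. auto.
Qed.

Definition chi_term (w : C) (t : R) (n : nat) : C :=
  let r := INR (S n) in
  Defs.Cdiv (Defs.Cexp (Defs.Cmul (Defs.RtoC (- r)) w))
            (Defs.Cmul (Defs.RtoC r) (Defs.Csub (Defs.Cexp (Defs.Cmul (Defs.RtoC (r / t)) w))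
                                                (Defs.RtoC 1))).

Definition prop24_rhs_term (L N : nat) (z : C) (n : nat) : C :=
  (RtoC (INR N) / z * polylog_term 2 (cexp z) n
   + RtoC (- / 2) * (- polylog_term 1 (cexp z) n)
   + csum (fun i => RtoC (bernoulli_coef (2 + i)) *
             (Cpow (z / RtoC (INR N)) (2 + i - 1) * polylog_term (2 - Z.of_nat (2 + i)) (cexp z) n))
          (L - 1))%C.

Definition chi_error_term (L N : nat) (z : C) (n : nat) : C :=
  (Cpow (cexp z) (S n) * / RtoC (INR (S n))
   * bernoulli_gf_rem L (RtoC (INR (S n) / INR N) * z))%C.

Lemma is_series_prop24_rhs_term L N z : Re z < 0 ->
  is_series (prop24_rhs_term L N z) (prop24_rhs L N z).
Proof.
  intros Hz. assert (Hu : Cmod (cexp z) < 1).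
  { rewrite Cmod_cexp, <- exp_0. apply exp_increasing. lra. }
  unfold prop24_rhs. rewrite fold_right_map_seq_C, (Clog_one_sub (Cexp z) Hu).
  apply (is_series_plus (V := C_NormedModule)); [apply (is_series_plus (V := C_NormedModule))|].
  - apply (is_series_scal (V := C_NormedModule)). apply is_series_Li; auto.
  - apply (is_series_scal (V := C_NormedModule)), (is_series_opp (V := C_NormedModule)).
    apply is_series_Li; auto.
  - apply (is_series_csum (fun i n => RtoC (bernoulli_coef (2 + i)) *
             (Cpow (z / RtoC (INR N)) (2 + i - 1)
              * polylog_term (2 - Z.of_nat (2 + i)) (cexp z) n))%C).
    intros i _. apply (is_series_scal (V := C_NormedModule)), (is_series_scal (V := C_NormedModule)).
    apply is_series_Li; auto.
Qed.

Lemma RtoC_neq0 r : r <> 0 -> RtoC r <> RtoC 0.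
Proof. intros H E. apply H. apply (RtoC_inj r 0 E). Qed.

Lemma bernoulli_gf_tail_scaled L (w z : C) r Nr : r <> 0 -> Nr <> 0 ->
  csum (fun i => RtoC (bernoulli_coef (2 + i)) *
          (Cpow (z / RtoC Nr) (2 + i - 1) * (w * RtoC (r ^ i))))%C (L - 1)
  = (w * / RtoC r * bernoulli_gf_tail L (RtoC (r / Nr) * z))%C.
Proof.
  intros Hr HN. unfold bernoulli_gf_tail. rewrite <- csumZ. apply csum_ext. intros i _.
  replace (2 + i - 1)%nat with (S i) by lia.
  rewrite RtoC_div, RtoC_pow by auto. unfold Cdiv. rewrite !Cpow_mult_l, !Cpow_S.
  pose proof (RtoC_neq0 r Hr). pose proof (RtoC_neq0 Nr HN).
  field. split; auto.
Qed.

Lemma chi_term_opp_eq L N z n : (1 <= L)%nat -> (1 <= N)%nat -> Re z < 0 ->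
  chi_term (Defs.Copp z) (INR N) n = (- (prop24_rhs_term L N z n + chi_error_term L N z n))%C.
Proof.
  intros HL HN Hz. set (r := INR (S n)). set (Nr := INR N). set (u := cexp z).
  assert (Hr : 0 < r) by (apply lt_0_INR; lia).
  assert (HNr : 0 < Nr) by (apply lt_0_INR; lia).
  assert (Hz0 : z <> RtoC 0) by (intros E; rewrite E in Hz; simpl in Hz; lra).
  set (y := (RtoC (r / Nr) * z)%C).
  assert (Hy : Re y < 0).
  { unfold y. rewrite re_scal_l.
    pose proof (Rdiv_lt_0_compat r Nr Hr HNr). nra. }
  change (chi_term (Defs.Copp z) Nr n) with (cexp (RtoC (- r) * - z)%C
    / (RtoC r * (cexp (RtoC (r / Nr) * - z)%C - 1)))%C.
  replace (RtoC (- r) * - z)%C with (RtoC r * z)%C by (rewrite RtoC_opp; ring).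
  replace (RtoC (r / Nr) * - z)%C with (- y)%C by (unfold y; ring).
  unfold r at 1. rewrite <- Cpow_cexp. fold u.
  unfold prop24_rhs_term, chi_error_term, polylog_term. fold r Nr y u.
  replace (csum _ (L - 1)) with (Cpow u (S n) * / RtoC r * bernoulli_gf_tail L y)%C.
  2: { unfold y. rewrite <- bernoulli_gf_tail_scaled by lra. apply csum_ext. intros i _.
       replace (- (2 - Z.of_nat (2 + i)))%Z with (Z.of_nat i) by lia.
       rewrite <- pow_powerRZ. reflexivity. }
  replace (powerRZ r (Z.opp 2)) with (/ (r * r)) by (simpl; f_equal; ring).
  replace (powerRZ r (Z.opp 1)) with (/ r) by (simpl; f_equal; ring).
  assert (HD : (cexp (- y) - 1)%C <> RtoC 0) by (apply cexp_sub1_neq0; rewrite re_opp; lra).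
  pose proof (RtoC_neq0 r ltac:(lra)).
  replace (Cpow u (S n) / (RtoC r * (cexp (- y) - 1)))%C
    with (Cpow u (S n) * / RtoC r * / (cexp (- y) - 1))%C by (field; auto).
  rewrite (inv_cexp_opp_sub1 L y HL Hy).
  unfold y. rewrite RtoC_opp, RtoC_div, !RtoC_inv, RtoC_mult by nra.
  pose proof (RtoC_neq0 Nr ltac:(lra)).
  field. repeat split; auto.
Qed.

Lemma chi_opp_expansion L N z E : (1 <= L)%nat -> (1 <= N)%nat -> Re z < 0 ->
  is_series (chi_error_term L N z) E -> chi (Defs.Copp z) (INR N) = (- (prop24_rhs L N z + E))%C.
Proof.
  intros HL HN Hz HE. apply is_series_Cseries.
  apply (is_series_ext (fun n => - (prop24_rhs_term L N z n + chi_error_term L N z n))%C).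
  - intros n. symmetry. apply chi_term_opp_eq; auto.
  - apply (is_series_opp (V := C_NormedModule)), (is_series_plus (V := C_NormedModule)); auto.
    apply is_series_prop24_rhs_term; auto.
Qed.

Lemma Cmod_chi_error_term_le L N z A m K q n :
  (1 <= L)%nat -> (1 <= N)%nat -> Re z < 0 -> Cmod z <= m * - Re z ->
  Cmod z <= K -> Cmod (cexp z) <= q -> 0 <= A ->
  (forall y, Re y < 0 -> Cmod y <= m * - Re y -> Cmod (bernoulli_gf_rem L y) <= A * Cmod y ^ L) ->
  Cmod (chi_error_term L N z n) <= A * (K / INR N) ^ L * (INR (S n) ^ (L - 1) * q ^ S n).
Proof.
  intros HL HN Hz Hsec HK Hu HA Hrem. set (r := INR (S n)). set (Nr := INR N).
  assert (Hr : 0 < r) by (apply lt_0_INR; lia).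
  assert (HNr : 0 < Nr) by (apply lt_0_INR; lia).
  assert (Hrn : 0 < r / Nr) by (apply Rdiv_lt_0_compat; auto).
  set (y := (RtoC (r / Nr) * z)%C).
  assert (Hy : Re y = r / Nr * Re z) by apply re_scal_l.
  assert (Hymod : Cmod y = r / Nr * Cmod z)
    by (unfold y; rewrite Cmod_mult, Cmod_R, Rabs_pos_eq; lra).
  assert (Hry : Cmod (bernoulli_gf_rem L y) <= A * (r / Nr * K) ^ L).
  { eapply Rle_trans. apply Hrem; rewrite ?Hy, ?Hymod; nra.
    rewrite Hymod. apply Rmult_le_compat_l; auto. apply pow_incr.
    pose proof (Cmod_ge_0 z). split; nra. }
  unfold chi_error_term. fold r Nr y.
  rewrite !Cmod_mult, Cmod_inv, Cmod_R, Rabs_pos_eq, Cmod_pow by (try lra; apply RtoC_neq0; lra).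
  pose proof (Cmod_ge_0 (cexp z)).
  assert (Hq : Cmod (cexp z) ^ S n <= q ^ S n) by (apply pow_incr; lra).
  apply Rle_trans with (q ^ S n * / r * (A * (r / Nr * K) ^ L)).
  { apply Rmult_le_compat; auto.
    - apply Rmult_le_pos. apply pow_le; auto. left; apply Rinv_0_lt_compat; auto.
    - apply Cmod_ge_0.
    - apply Rmult_le_compat_r; auto. left; apply Rinv_0_lt_compat; auto. }
  right. destruct L as [|L']. lia. replace (S L' - 1)%nat with L' by lia.
  replace (r / Nr * K) with (r * (K / Nr)) by (field; lra).
  rewrite Rpow_mult_distr, <- (tech_pow_Rmult r L'). field. lra.
Qed.

Lemma Cmod_le_sector (z : C) delta K : 0 < delta -> Re z <= - delta -> Cmod z <= K ->
  Cmod z <= K / delta * - Re z.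
Proof.
  intros Hd Hz HK. pose proof (Cmod_ge_0 z).
  apply Rle_trans with K; auto.
  replace (K / delta * - Re z) with (K * (- Re z / delta)) by (field; lra).
  assert (1 <= - Re z / delta) by (apply Rmult_le_reg_r with delta; auto; field_simplify; lra).
  nra.
Qed.

Theorem proposition2p4 (L : nat) (delta K : R) :
  (1 <= L)%nat -> 0 < delta -> 0 < K ->
  exists M : R, forall (N : nat) (z : Cx),
    (1 <= N)%nat -> Defs.Re z <= - delta -> Cnorm z <= K ->
    Cnorm (Csub (Defs.Copp (chi (Defs.Copp z) (INR N))) (prop24_rhs L N z)) <= M / INR N ^ L.
Proof.
  intros HL Hd HK.
  set (q := exp (- delta)).
  assert (Hq : 0 < q < 1) by (split; [apply exp_pos | rewrite <- exp_0; apply exp_increasing; lra]).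
  destruct (ex_series_pow_geom (L - 1) q Hq) as [S0 HS0].
  destruct (Cmod_bernoulli_gf_rem_le L (K / delta)) as (A & HA & Hrem).
  { apply Rdiv_lt_0_compat; lra. }
  exists (A * K ^ L * S0). intros N z HN Hz HzK.
  change (Cnorm z) with (Cmod z) in HzK.
  change (Defs.Re z) with (Re z) in Hz.
  assert (Hsec : Cmod z <= K / delta * - Re z) by (apply Cmod_le_sector; auto).
  assert (Hu : Cmod (cexp z) <= q) by (rewrite Cmod_cexp; apply exp_le_mono; auto).
  set (b := fun n => A * (K / INR N) ^ L * (INR (S n) ^ (L - 1) * q ^ S n)).
  assert (Hb : is_series b (A * (K / INR N) ^ L * S0)) by apply (is_series_scal _ _ _ HS0).
  assert (Herr : forall n, Cmod (chi_error_term L N z n) <= b n).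
  { intros n. apply (Cmod_chi_error_term_le L N z A (K / delta)); auto. lra. }
  destruct (ex_series_le (chi_error_term L N z) b Herr (ex_intro _ _ Hb)) as [E HE].
  rewrite (chi_opp_expansion L N z E) by (auto; lra).
  change (Cnorm ?w) with (Cmod w).
  replace (Csub (Defs.Copp (- (prop24_rhs L N z + E))%C) (prop24_rhs L N z)) with E
    by (destruct (prop24_rhs L N z), E; apply injective_projections; simpl; ring).
  eapply Rle_trans. apply (is_series_Cmod_le _ _ _ _ HE Hb Herr).
  right. unfold Rdiv. rewrite Rpow_mult_distr, pow_inv. ring.
Qed.
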